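(* Let $k\geq 2$ and $n\geq k$ be integers. In the quasi-shuffle algebra $(\mathcal{H},\ast)$, $$ \sum_{\substack{ r, s_i\geq 1 \\ r+s_1+\cdots +s_{k-1}=n}} z_{r}\ast z_{s_1,\dots, s_{k-1}} = k \sum_{\substack{t_i\geq 1 \\ t_1+\cdots+t_{k}=n}} z_{t_1,\dots, t_{k}} + (n-k+1) \sum_{\substack{u_i\geq 1 \\ u_1+\cdots+u_{k-1}=n }} z_{u_1,\dots, u_{k-1}}. $$
   Context: Let $\mathcal{H}$ be the free $\mathbb{Z}$-module on the free monoid generated by letters $z_s$ ($s\geq 1$ an integer); write $z_{s_1,\dots,s_k}:=z_{s_1}z_{s_2}\cdots z_{s_k}$ for a word and $1$ for the empty word. The quasi-shuffle (stuffle) product $\ast$ is the $\mathbb{Z}$-bilinear product on $\mathcal{H}$ defined on words recursively by $1\ast u=u\ast 1=u$ and $(z_{r}u)\ast(z_{s}v)=z_{r}\,(u\ast (z_{s}v))+z_{s}\,((z_{r}u)\ast v)+z_{r+s}\,(u\ast v)$ for words $u,v$ and integers $r,s\geq 1$ (juxtaposition denotes concatenation, extended linearly). *)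

From HB Require Import structures.
From mathcomp Require Import all_boot all_order all_algebra.
From mathcomp Require Import freeg.
Set Implicit Arguments. Unset Strict Implicit. Unset Printing Implicit Defensive.
Import Order.TTheory GRing.Theory Num.Theory.
Local Open Scope ring_scope.

(* Words z_{s_1,...,s_k} are represented by the sequence [:: s_1; ...; s_k];
   the empty word is [::].  The letters used in the statement are all >= 1. *)
Definition word := seq nat.

Definition H := {freeg word / int}.

Definition z (w : word) : H := << w >>.

Definition zcons (r : nat) (x : H) : H := fglift (fun w : word => z (r :: w)) x.

Fixpoint stuffle_w (u v : word) {struct u} : H :=
  match u with
  | [::] => z v
  | r :: u' =>
    let fix aux (v : word) : H :=
      match v with
      | [::] => z u
      | s :: v' => zcons r (stuffle_w u' v) + zcons s (aux v')
                   + zcons (r + s) (stuffle_w u' v')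
      end in aux v
  end.

Definition stuffle (x y : H) : H :=
  fglift (fun u : word => fglift (fun v : word => stuffle_w u v) y) x.

Notation "x \ast y" := (stuffle x y) (at level 40, left associativity).

(* Let C(m, n) be the sum of the words of m positive letters and total weight n.
   Stuffling a letter z_r into a word z_s w gives z_r z_s w + z_s (z_r * w) + z_{r+s} w,
   so summing over r and over the compositions of the remaining weight yields the
   recursion  sum_r z_r * C(m, n - r) = (m + 1) C(m + 1, n) + (n - m) C(m, n),
   proved by induction on m: the first term regroups into C(m + 2, n), the second
   into (m + 1) C(m + 2, n) plus a weighted C(m + 1, n) by induction, and the third
   contributes each composition of C(m + 1, n) once for every way to split its
   first letter.  The theorem is the case m = k - 1. *)
From HB Require Import structures.
From mathcomp Require Import all_boot all_order all_algebra.
From mathcomp Require Import freeg zify.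
Import GRing.Theory.
Local Open Scope ring_scope.

HB.instance Definition _ (f : word -> H) :=
  GRing.isZmodMorphism.Build H H (fglift f) (lift_is_additive f).

Notation stuffle_letter r := (fglift (stuffle_w [:: r])).

Arguments stuffle_w : simpl never.

Lemma fglift_z (f : word -> H) w : fglift f (z w) = f w.
Proof. by rewrite /z liftU scale1r. Qed.

Lemma zcons_z r w : zcons r (z w) = z (r :: w).
Proof. exact: fglift_z. Qed.

Lemma stuffle_w1_cons r s v :
  stuffle_w [:: r] (s :: v)
  = z [:: r, s & v] + zcons s (stuffle_w [:: r] v) + zcons (r + s) (z v).
Proof. by rewrite -zcons_z. Qed.

Lemma zcons0 r : zcons r 0 = 0.
Proof. exact: raddf0. Qed.

Lemma stuffle_z1 r x : z [:: r] \ast x = stuffle_letter r x.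
Proof. by rewrite /stuffle fglift_z. Qed.

Lemma freeg_zE (x : H) : x = \sum_(w <- dom x) z w *~ coeff w x.
Proof.
rewrite -[x in LHS]freeg_sumE; apply: eq_bigr => w _.
by rewrite /z freeg_mulz intz.
Qed.

Lemma stuffle_letter_zcons r s x :
  stuffle_letter r (zcons s x)
  = zcons r (zcons s x) + zcons s (stuffle_letter r x) + zcons (r + s) x.
Proof.
rewrite (freeg_zE x) /zcons !raddf_sum -!big_split; apply: eq_bigr => v _.
by rewrite !raddfMz /= !fglift_z stuffle_w1_cons !zcons_z -!mulrzDl.
Qed.

Section TriangleSums.

Variable V : nmodType.

Lemma sum_triangleS (g : nat -> nat -> V) n :
  \sum_(1 <= r < n.+2) \sum_(1 <= s < (n.+1 - r)%N.+1) g r s =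
  \sum_(1 <= r < n.+1) \sum_(1 <= s < (n - r)%N.+1) g r s
  + \sum_(1 <= r < n.+1) g r (n.+1 - r)%N.
Proof.
rewrite big_nat_recr //= [X in _ + X]big_geq ?subnn // addr0 -big_split /=.
apply: eq_big_nat => r /andP[r1 rn].
rewrite subSn; last by lia.
rewrite big_nat_recr //=; congr (_ + g r _); lia.
Qed.

Lemma sum_triangle_diag (h : nat -> V) n :
  \sum_(1 <= r < n.+1) \sum_(1 <= s < (n - r)%N.+1) h (r + s)%N =
  \sum_(1 <= t < n.+1) h t *+ t.-1.
Proof.
elim: n => [|n IHn]; first by rewrite !big_geq.
rewrite (sum_triangleS (fun r s => h (r + s)%N)) IHn [RHS]big_nat_recr //=.
congr (_ + _); rewrite -[n in RHS](subn1 n.+1) -sumr_const_nat.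
by apply: eq_big_nat => r /andP[r1 rn]; congr h; lia.
Qed.

Lemma sum_triangle_swap (g : nat -> nat -> V) n :
  \sum_(1 <= r < n.+1) \sum_(1 <= s < (n - r)%N.+1) g r s =
  \sum_(1 <= s < n.+1) \sum_(1 <= r < (n - s)%N.+1) g r s.
Proof.
elim: n => [|n IHn]; first by rewrite !big_geq.
rewrite (sum_triangleS g) (sum_triangleS (fun s r => g r s)) IHn; congr (_ + _).
by rewrite big_nat_rev /=; apply: eq_big_nat => r /andP[r1 rn]; congr g; lia.
Qed.

End TriangleSums.

Lemma big_nat_pos (V : nmodType) (f : nat -> V) N :
  \sum_(0 <= i < N | (0 < i)%N) f i = \sum_(1 <= i < N) f i.
Proof.
case: N => [|N]; first by rewrite !big_geq.
by rewrite big_mkcond big_nat_recl //= add0r big_add1.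
Qed.

Lemma big_tupleS (V : nmodType) (T : finType) m (P : pred (m.+1.-tuple T))
    (f : m.+1.-tuple T -> V) :
  \sum_(t | P t) f t =
  \sum_(x : T) \sum_(t : m.-tuple T | P [tuple of x :: t]) f [tuple of x :: t].
Proof.
rewrite pair_big_dep /=.
rewrite (reindex (fun p : T * m.-tuple T => [tuple of p.1 :: p.2])) //=.
exists (fun t => (thead t, [tuple of behead t])) => [[x t]|t] _ /=.
  by congr (_, _); apply: val_inj.
by rewrite [RHS]tuple_eta.
Qed.

Fixpoint compositions (m n : nat) : H :=
  if m is m'.+1 then \sum_(1 <= t < n.+1) zcons t (compositions m' (n - t))
  else if n == 0 then z [::] else 0.

Lemma compositions0 n : compositions 0 n = if n == 0 then z [::] else 0.
Proof. by []. Qed.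

Lemma compositionsS m n :
  compositions m.+1 n = \sum_(1 <= t < n.+1) zcons t (compositions m (n - t)).
Proof. by []. Qed.

Arguments compositions : simpl never.

Lemma compositions_small m n : (n < m)%N -> compositions m n = 0.
Proof.
elim: m n => [|m IHm] n // ltnm.
rewrite compositionsS big_nat big1 // => t /andP[t1 tn].
by rewrite IHm ?zcons0 //; lia.
Qed.

Lemma sum_compositions_zcons_zcons m n :
  \sum_(1 <= r < n.+1) \sum_(1 <= s < (n - r)%N.+1)
    zcons r (zcons s (compositions m (n - r - s))) = compositions m.+2 n.
Proof. by apply: eq_big_nat => r _; rewrite /zcons raddf_sum. Qed.

Lemma sum_compositions_split_letter m n :
  \sum_(1 <= r < n.+1) \sum_(1 <= s < (n - r)%N.+1)
    zcons (r + s) (compositions m (n - r - s))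
  = \sum_(1 <= t < n.+1) zcons t (compositions m (n - t)) *+ t.-1.
Proof.
rewrite -(sum_triangle_diag _ (fun t => zcons t (compositions m (n - t)))).
by apply: eq_big_nat => r _; apply: eq_big_nat => s _; rewrite subnDA.
Qed.

Lemma stuffle_letter_compositions m n :
  \sum_(1 <= r < n.+1) stuffle_letter r (compositions m (n - r))
  = compositions m.+1 n *+ m.+1 + compositions m n *+ (n - m).
Proof.
elim: m n => [|m IHm] n.
  rewrite compositionsS subn0 mulr1n.
  have -> : compositions 0 n *+ n = 0.
    by case: n => [|n]; rewrite ?mulr0n // compositions0 mul0rn.
  rewrite addr0; apply: eq_big_nat => r _; rewrite compositions0.
  by case: eqP => _; rewrite ?raddf0 ?zcons0 // fglift_z zcons_z.
have swapped : \sum_(1 <= r < n.+1) \sum_(1 <= s < (n - r)%N.+1)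
      zcons s (stuffle_letter r (compositions m (n - r - s)))
    = compositions m.+2 n *+ m.+1
      + \sum_(1 <= t < n.+1) zcons t (compositions m (n - t)) *+ (n - t - m).
  rewrite sum_triangle_swap /= -sumrMnl -big_split /=; apply: eq_big_nat => s _.
  under eq_big_nat => r _ do rewrite subnAC.
  by rewrite /zcons -raddf_sum IHm raddfD !raddfMn.
under eq_big_nat => r _ do rewrite compositionsS raddf_sum
  (eq_big_nat _ _ (fun s _ => stuffle_letter_zcons _ _ _)) !big_split.
rewrite !big_split sum_compositions_zcons_zcons swapped.
rewrite sum_compositions_split_letter [compositions m.+1 n]compositionsS.
rewrite -(sumrMnl _ _ _ (n - m.+1)) /= addrA -mulrS -addrA -big_split /=; congr (_ + _).
apply: eq_big_nat => t /andP[t1 tn]; rewrite -mulrnDr.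
have [lemnt|ltntm] := leqP m (n - t); first by congr (_ *+ _); lia.
by rewrite compositions_small // zcons0 !mul0rn.
Qed.

Lemma sum_tuples_compositions m N n : (n <= N)%N ->
  \sum_(t : m.-tuple 'I_N.+1 |
        all (fun i : 'I_N.+1 => (0 < i)%N) t && (sumn (map val t) == n))
     z (map val t) = compositions m n.
Proof.
elim: m n => [|m IHm] n len.
  rewrite big_mkcond (big_pred1 [tuple]) /= => [|t].
    by rewrite compositions0 eq_sym.
  by symmetry; apply/eqP; exact: tuple0.
rewrite big_tupleS compositionsS -big_nat_pos big_mkord.
rewrite (big_ord_widen_cond _ (fun i => 0 < i)%N
  (fun i => zcons i (compositions m (n - i))) (_ : n.+1 <= N.+1)%N) //.
rewrite [RHS]big_mkcond; apply: eq_bigr => x _.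
case: ifP => [/andP[x0 xn]|xbad].
  rewrite -(IHm (n - x)%N); last by lia.
  rewrite /zcons raddf_sum; apply: eq_big => [t|t _] /=; last by rewrite fglift_z.
  by rewrite x0 /=; congr (_ && _); apply/eqP/eqP; lia.
rewrite big_pred0 // => t /=.
by apply/negbTE/negP => /andP[/andP[x0 _] /eqP e]; move: xbad; rewrite x0 /=; lia.
Qed.

Theorem theorem2p3 (k n : nat) (hk : (2 <= k)%N) (hn : (k <= n)%N) :
  \sum_(r : 'I_n.+1) \sum_(s : k.-1.-tuple 'I_n.+1 |
        [&& (0 < r)%N, all (fun i : 'I_n.+1 => (0 < i)%N) s
          & (r + sumn (map val s))%N == n])
     (z [:: val r] \ast z (map val s))
  =
  (\sum_(t : k.-tuple 'I_n.+1 |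
        all (fun i : 'I_n.+1 => (0 < i)%N) t && (sumn (map val t) == n))
     z (map val t)) *+ k
  + (\sum_(u : k.-1.-tuple 'I_n.+1 |
        all (fun i : 'I_n.+1 => (0 < i)%N) u && (sumn (map val u) == n))
     z (map val u)) *+ (n - k + 1).
Proof.
rewrite !sum_tuples_compositions //.
have -> : (n - k + 1)%N = (n - k.-1)%N by lia.
rewrite -[in RHS](prednK (ltnW hk)) -stuffle_letter_compositions.
rewrite -big_nat_pos big_mkord [RHS]big_mkcond; apply: eq_bigr => r _.
case: ifP => [r0|]; last by move=> _; rewrite big_pred0.
rewrite -(@sum_tuples_compositions k.-1 n (n - r) (leq_subr r n)) raddf_sum.
apply: eq_big => [s|s _] /=; last by rewrite stuffle_z1.
by move: (ltn_ord r) => rn; congr (_ && _); apply/eqP/eqP; lia.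
Qed.
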